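(* For all $k,\ell\in\mathbb N_0$, in $\mathrm{sVW}$ one has $b\circ(y^k\otimes y^\ell)\circ b^*=0$ in $\mathrm{Hom}(0,0)$; equivalently $b_iy_i^ky_{i+1}^\ell b_i^*=0$ for all $i\ge1$.
   Context: Work over $\mathbb C$. A supercategory is a category enriched in $\mathbb Z/2$-graded vector spaces with parity-preserving composition; in a monoidal supercategory the super interchange law $(f\otimes g)\circ(h\otimes k)=(-1)^{\bar g\bar h}(f\circ h)\otimes(g\circ k)$ holds for homogeneous morphisms. The affine VW supercategory $\mathrm{sVW}$ is the $\mathbb C$-linear strict monoidal supercategory generated by one object $\star$ and morphisms $s:\star\otimes\star\to\star\otimes\star$ (even), $b:\star\otimes\star\to\mathbb 1$ (odd), $b^*:\mathbb 1\to\star\otimes\star$ (odd), $y:\star\to\star$ (even), subject to: (R1) $s\circ s=1_{\star\otimes\star}$ and $(s\otimes 1)(1\otimes s)(s\otimes 1)=(1\otimes s)(s\otimes1)(1\otimes s)$; (R2) $(b\otimes 1_\star)\circ(1_\star\otimes b^* )=-1_\star$ and $(1_\star\otimes b)\circ(b^*\otimes 1_\star)=1_\star$; (R3) $(1_\star\otimes s)\circ(b^*\otimes 1_\star)=(s\otimes 1_\star)\circ(1_\star\otimes b^* )$ and $s\circ b^*=-b^*$; (R4) $1_\star\otimes y=s\circ(y\otimes 1_\star)\circ s+s+b^*\circ b$ and $b\circ(1_\star\otimes y)=b\circ(y\otimes 1_\star)+b$. Objects are identified with $a\in\mathbb N_0$; $b_i=1_{i-1}\otimes b\otimes 1_{a-i+1}$,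 $b_i^*=1_{i-1}\otimes b^*\otimes 1_{a-i+1}$, $y_i=1_{i-1}\otimes y\otimes 1_{a-i}$. *)

From HB Require Import structures.
From mathcomp Require Import all_boot all_order all_algebra.
Set Implicit Arguments. Unset Strict Implicit. Unset Printing Implicit Defensive.
Import GRing.Theory.
Local Open Scope ring_scope.

Definition castH (H : nat -> nat -> Type) (a a' b b' : nat)
  (e1 : a = a') (e2 : b = b') (f : H a b) : H a' b' :=
  match e1 in _ = x return H x b' with
  | erefl => match e2 in _ = y return H a y with erefl => f end
  end.

(* A K-linear strict monoidal supercategory whose objects are the natural
   numbers with tensor product of objects given by addition (i.e. the
   full monoidal subcategory on the tensor powers of one object).
   par a b p f  means "f : a -> b is homogeneous of parity p"
   (false = even, true = odd). *)
Record MonSuperCat (K : fieldType) := MonSuperCat_ {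
  hom : nat -> nat -> lmodType K;
  par : forall a b, bool -> hom a b -> Prop;
  par0 : forall a b p, par p (0 : hom a b);
  parD : forall a b p (c : K) (f g : hom a b),
      par p f -> par p g -> par p (c *: f + g);
  par_decomp : forall a b (f : hom a b),
      exists f0 f1, [/\ par false f0, par true f1 & f = f0 + f1];
  par_disj : forall a b (f : hom a b), par false f -> par true f -> f = 0;
  mcomp : forall a b c, hom b c -> hom a b -> hom a c;
  midm : forall a, hom a a;
  compDl : forall a b c (k : K) (f g : hom b c) (h : hom a b),
      mcomp (k *: f + g) h = k *: mcomp f h + mcomp g h;
  compDr : forall a b c (k : K) (f : hom b c) (g h : hom a b),
      mcomp f (k *: g + h) = k *: mcomp f g + mcomp f h;
  compA : forall a b c d (f : hom c d) (g : hom b c) (h : hom a b),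
      mcomp f (mcomp g h) = mcomp (mcomp f g) h;
  comp1f : forall a b (f : hom a b), mcomp (midm b) f = f;
  compf1 : forall a b (f : hom a b), mcomp f (midm a) = f;
  par_idm : forall a, par false (midm a);
  par_comp : forall a b c p q (f : hom b c) (g : hom a b),
      par p f -> par q g -> par (p (+) q) (mcomp f g);
  mtens : forall a b c d, hom a b -> hom c d -> hom (a + c) (b + d);
  tensDl : forall a b c d (k : K) (f g : hom a b) (h : hom c d),
      mtens (k *: f + g) h = k *: mtens f h + mtens g h;
  tensDr : forall a b c d (k : K) (f : hom a b) (g h : hom c d),
      mtens f (k *: g + h) = k *: mtens f g + mtens f h;
  par_tens : forall a b c d p q (f : hom a b) (g : hom c d),
      par p f -> par q g -> par (p (+) q) (mtens f g);
  tens_idm : forall a c, mtens (midm a) (midm c) = midm (a + c);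
  tensA : forall a b c d e g (f1 : hom a b) (f2 : hom c d) (f3 : hom e g),
      mtens f1 (mtens f2 f3)
      = @castH (fun x y => hom x y) _ _ _ _ (esym (addnA a c e)) (esym (addnA b d g)) (mtens (mtens f1 f2) f3);
  tens0f : forall a b (f : hom a b), mtens (midm 0) f = f;
  tensf0 : forall a b (f : hom a b),
      @castH (fun x y => hom x y) _ _ _ _ (addn0 a) (addn0 b) (mtens f (midm 0)) = f;
  interchange : forall a b c d e g p1 p2 p3 p4
      (f : hom b c) (g' : hom e g) (h : hom a b) (k : hom d e),
      par p1 f -> par p2 g' -> par p3 h -> par p4 k ->
      mcomp (mtens f g') (mtens h k) = (-1) ^+ (p2 && p3) *: mtens (mcomp f h) (mcomp g' k)
}.

Arguments hom {K} _ _ _.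
Arguments par {K} _ {_ _} _ _.
Arguments mcomp {K} _ {_ _ _} _ _.
Arguments midm {K} _ _.
Arguments mtens {K} _ {_ _ _ _} _ _.

Fixpoint hpow (K : fieldType) (C : MonSuperCat K) (a : nat) (f : hom C a a) (n : nat)
  : hom C a a :=
  match n with 0 => midm C a | n'.+1 => mcomp C f (hpow f n') end.

(* The generators s, b, b^*, y of sVW realized in C, subject to (R1)-(R4).
   Object a stands for the a-fold tensor power of the generating object. *)
Record sVW_rep (K : fieldType) (C : MonSuperCat K) := sVW_rep_ {
  s : hom C 2 2;
  b : hom C 2 0;
  bs : hom C 0 2;
  y : hom C 1 1;
  par_s : par C false s;
  par_b : par C true b;
  par_bs : par C true bs;
  par_y : par C false y;
  R1a : mcomp C s s = midm C 2;
  R1b : mcomp C (mtens C s (midm C 1))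
          (mcomp C (mtens C (midm C 1) s) (mtens C s (midm C 1)))
        = mcomp C (mtens C (midm C 1) s)
          (mcomp C (mtens C s (midm C 1)) (mtens C (midm C 1) s));
  R2a : mcomp C (mtens C b (midm C 1)) (mtens C (midm C 1) bs) = - midm C 1;
  R2b : mcomp C (mtens C (midm C 1) b) (mtens C bs (midm C 1)) = midm C 1;
  R3a : mcomp C (mtens C (midm C 1) s) (mtens C bs (midm C 1))
        = mcomp C (mtens C s (midm C 1)) (mtens C (midm C 1) bs);
  R3b : mcomp C s bs = - bs;
  R4a : mtens C (midm C 1) y
        = mcomp C s (mcomp C (mtens C y (midm C 1)) s) + s + mcomp C bs b;
  R4b : mcomp C b (mtens C (midm C 1) y) = mcomp C b (mtens C y (midm C 1)) + b
}.

From Pilot Require Import Defs.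
From HB Require Import structures.
From mathcomp Require Import all_boot all_order all_algebra.
Set Implicit Arguments. Unset Strict Implicit. Unset Printing Implicit Defensive.
Import GRing.Theory Num.Theory.
Local Open Scope ring_scope.

(* Write y1 = y ⊗ 1 and y2 = 1 ⊗ y and consider the bubbles
   B(j,k) = b y2^j y1^k b* and the crossed bubbles G(j,k) = b y2^j s y1^k b*.
   Relation (R4) moves a dot across the cap, B(j+1,k) = B(j,k+1) + B(j,k), and
   across the crossing, G(j,k+1) = G(j+1,k) - B(j,k) - B(j,0) B(0,k).  By
   induction on j + k = N, all bubbles of smaller degree vanish, so both B and
   G are constant along the antidiagonal j + k = N.  Since s b* = -b* and
   b s = b we have G(N,0) = -B(N,0) and G(0,N) = B(0,N), whence
   B(0,N) = -B(0,N), which is 0 in characteristic different from 2.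
   The identity b s = b is not among the relations: it comes from sliding the
   crossing through a cup and a cap, i.e. from the mate of (R3) under (R2). *)

Notation "f ⊗ g" := (mtens _ f g) (at level 33, left associativity).
Notation "f ∘ g" := (mcomp _ f g) (at level 37, right associativity).

Lemma antidiagonal_const (T : Type) (u : nat -> nat -> T) N :
  (forall j k, (j + k).+1 = N -> u j.+1 k = u j k.+1) ->
  forall j k, (j + k)%N = N -> u j k = u 0 N.
Proof.
move=> shift; elim=> [|j IHj] k e; first by rewrite -e.
by rewrite shift ?IHj // -addSnnS.
Qed.

Lemma eq_oppr_eq0 (K : fieldType) (W : lmodType K) (x : W) :
  (2%:R : K) != 0 -> x = - x -> x = 0.
Proof.
move=> two_neq0 xN; have : (2%:R : K) *: x == 0 by rewrite scaler_nat mulr2n {2}xN subrr.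
by rewrite scaler_eq0 (negbTE two_neq0) => /eqP.
Qed.

Section SuperCategory.
Variables (K : fieldType) (C : MonSuperCat K).
Local Notation hom := (Defs.hom C).
Local Notation idm := (midm C).
Local Notation cast := (@castH (fun x y => hom x y) _ _ _ _).

(* Composition and tensor product are linear in each variable; mcompr and
   mtensr put the left variable last so that it can carry a linear structure. *)
Definition mcompr a b c (h : hom a b) (f : hom b c) : hom a c := f ∘ h.
Definition mtensr a b c d (g : hom c d) (f : hom a b) : hom (a + c) (b + d) := f ⊗ g.

HB.instance Definition _ a b c (f : hom b c) :=
  GRing.isLinear.Build K (hom a b) (hom a c) *:%R (mcomp C f) (fun k => compDr k f).
HB.instance Definition _ a b c (h : hom a b) :=
  GRing.isLinear.Build K (hom b c) (hom a c) *:%R (mcompr h)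
    (fun k f g => compDl k f g h).
HB.instance Definition _ a b c d (f : hom a b) :=
  GRing.isLinear.Build K (hom c d) (hom (a + c) (b + d)) *:%R (mtens C f)
    (fun k => tensDr k f).
HB.instance Definition _ a b c d (g : hom c d) :=
  GRing.isLinear.Build K (hom a b) (hom (a + c) (b + d)) *:%R (mtensr g)
    (fun k f h => tensDl k f h g).

Lemma mcompDl a b c (f g : hom b c) (h : hom a b) : (f + g) ∘ h = f ∘ h + g ∘ h.
Proof. exact: linearD (mcompr h) f g. Qed.

Lemma mcompNl a b c (f : hom b c) (h : hom a b) : (- f) ∘ h = - (f ∘ h).
Proof. exact: linearN (mcompr h) f. Qed.

Lemma mcomp0l a b c (h : hom a b) : (0 : hom b c) ∘ h = 0.
Proof. exact: linear0 (mcompr h). Qed.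

Lemma mtensDl a b c d (f g : hom a b) (h : hom c d) : (f + g) ⊗ h = f ⊗ h + g ⊗ h.
Proof. exact: linearD (mtensr h) f g. Qed.

Lemma mtensNl a b c d (f : hom a b) (h : hom c d) : (- f) ⊗ h = - (f ⊗ h).
Proof. exact: linearN (mtensr h) f. Qed.

Lemma castH_id a b (e1 : a = a) (e2 : b = b) (f : hom a b) : cast e1 e2 f = f.
Proof. by rewrite (eq_irrelevance e1 erefl) (eq_irrelevance e2 erefl). Qed.

Lemma castHK a a' b b' (e1 : a = a') (e2 : b = b') (f : hom a' b') :
  cast e1 e2 (cast (esym e1) (esym e2) f) = f.
Proof. by case: a' / e1 f; case: b' / e2. Qed.

Lemma mtensA_r a b c d e g (f1 : hom a b) (f2 : hom c d) (f3 : hom e g) :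
  f1 ⊗ f2 ⊗ f3 = cast (addnA a c e) (addnA b d g) (f1 ⊗ (f2 ⊗ f3)).
Proof. by rewrite tensA castHK. Qed.

Lemma par_ind a b (P : hom a b -> Prop) :
  (forall p f, par C p f -> P f) -> (forall f g, P f -> P g -> P (f + g)) ->
  forall f, P f.
Proof.
move=> Phom PD f; have [f0 [f1 [pf0 pf1 ->]]] := par_decomp f.
by apply: PD; [apply: Phom pf0 | apply: Phom pf1].
Qed.

Lemma mcomp_idm_tensl n a b c (f : hom b c) (g : hom a b) :
  (idm n ⊗ f) ∘ (idm n ⊗ g) = idm n ⊗ (f ∘ g).
Proof.
elim/par_ind: f => [p f pf|f1 f2 IH1 IH2]; last by rewrite !(linearD, mcompDl) /= IH1 IH2.
elim/par_ind: g => [q g pg|g1 g2 IH1 IH2]; last by rewrite !linearD /= IH1 IH2.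
have I := par_idm C n.
by rewrite (Defs.interchange I pf I pg) andbF expr0 scale1r comp1f.
Qed.

Lemma mcomp_idm_tensr n a b c (f : hom b c) (g : hom a b) :
  (f ⊗ idm n) ∘ (g ⊗ idm n) = (f ∘ g) ⊗ idm n.
Proof.
elim/par_ind: f => [p f pf|f1 f2 IH1 IH2]; last by rewrite !(mtensDl, mcompDl) /= IH1 IH2.
elim/par_ind: g => [q g pg|g1 g2 IH1 IH2]; last by rewrite !(mtensDl, linearD) /= IH1 IH2.
have I := par_idm C n.
by rewrite (Defs.interchange pf I pg I) expr0 scale1r comp1f.
Qed.

Lemma mtens_split a b c d (f : hom a b) (g : hom c d) :
  (f ⊗ idm d) ∘ (idm a ⊗ g) = f ⊗ g.
Proof.
elim/par_ind: f => [p f pf|f1 f2 IH1 IH2]; last by rewrite !(mtensDl, mcompDl) /= IH1 IH2.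
elim/par_ind: g => [q g pg|g1 g2 IH1 IH2]; last by rewrite !linearD /= IH1 IH2.
by rewrite (Defs.interchange pf (par_idm C d) (par_idm C a) pg) expr0 scale1r comp1f compf1.
Qed.

Lemma mtens_split_swap a b c d p q (f : hom a b) (g : hom c d) :
  par C p f -> par C q g ->
  (idm b ⊗ g) ∘ (f ⊗ idm c) = (-1) ^+ (q && p) *: (f ⊗ g).
Proof.
by move=> pf pg; rewrite (Defs.interchange (par_idm C b) pg pf (par_idm C c)) comp1f compf1.
Qed.

Lemma hpowSr a (f : hom a a) n : hpow f n.+1 = hpow f n ∘ f.
Proof.
elim: n => [|n IHn] /=; first by rewrite comp1f compf1.
by rewrite -Defs.compA -IHn.
Qed.

Lemma hpow_commr a (f g : hom a a) n : f ∘ g = g ∘ f -> f ∘ hpow g n = hpow g n ∘ f.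
Proof.
move=> fg; elim: n => [|n IHn] /=; first by rewrite comp1f compf1.
by rewrite Defs.compA fg -Defs.compA IHn Defs.compA.
Qed.

Lemma hpowC a (f g : hom a a) m n :
  f ∘ g = g ∘ f -> hpow f m ∘ hpow g n = hpow g n ∘ hpow f m.
Proof.
move=> fg; elim: m => [|m IHm] /=; first by rewrite comp1f compf1.
by rewrite -Defs.compA IHm !Defs.compA (hpow_commr n fg).
Qed.

Lemma hpow_tensl n a (f : hom a a) k : idm n ⊗ hpow f k = hpow (idm n ⊗ f) k.
Proof.
elim: k => [|k IHk] /=; first by rewrite tens_idm.
by rewrite -mcomp_idm_tensl IHk.
Qed.

Lemma hpow_tensr n a (f : hom a a) k : hpow f k ⊗ idm n = hpow (f ⊗ idm n) k.
Proof.
elim: k => [|k IHk] /=; first by rewrite tens_idm.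
by rewrite -mcomp_idm_tensr IHk.
Qed.

End SuperCategory.

Section AffineVW.
Variables (K : fieldType) (C : MonSuperCat K) (V : sVW_rep C).
Local Notation hom := (Defs.hom C).
Local Notation idm := (midm C).
Local Notation s := (s V).
Local Notation b := (b V).
Local Notation bs := (bs V).
Local Notation y := (y V).

Lemma cup_crossing_cap :
  (idm 1 ⊗ ((idm 1 ⊗ b) ∘ (s ⊗ idm 1))) ∘ (bs ⊗ idm 2) = s.
Proof.
rewrite -mcomp_idm_tensl (tensA (idm 1) s (idm 1)) castH_id.
rewrite -[idm 2](tens_idm C 1 1) -Defs.compA (tensA bs (idm 1) (idm 1)) castH_id.
rewrite (mcomp_idm_tensr 1 (idm 1 ⊗ s) (bs ⊗ idm 1)) (R3a V) -mcomp_idm_tensr.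
rewrite (mtensA_r s (idm 1) (idm 1)) (mtensA_r (idm 1) bs (idm 1)) !castH_id.
rewrite (tensA (idm 1) (idm 1) b) castH_id tens_idm Defs.compA.
rewrite (mtens_split_swap (par_s V) (par_b V)) expr0 scale1r -(mtens_split s b).
have s_tens0 := tensf0 s; rewrite castH_id in s_tens0; rewrite s_tens0.
rewrite -Defs.compA -[idm 2](tens_idm C 1 1) (mtensA_r (idm 1) (idm 1) b) castH_id.
by rewrite (mcomp_idm_tensl 1 (idm 1 ⊗ b) (bs ⊗ idm 1)) (R2b V) tens_idm compf1.
Qed.

Lemma odd_snake (f : hom 3 1) : par C true f ->
  (b ⊗ idm 1) ∘ (idm 1 ⊗ ((idm 1 ⊗ f) ∘ (bs ⊗ idm 2))) = f.
Proof.
move=> pf.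
rewrite -mcomp_idm_tensl (tensA (idm 1) (idm 1) f) castH_id tens_idm.
rewrite Defs.compA (mtens_split b f).
have bf := mtens_split_swap (par_b V) pf; rewrite tens0f expr1 scaleN1r in bf.
rewrite -[b ⊗ f]opprK -bf mcompNl -Defs.compA.
rewrite -[idm 3](tens_idm C 1 2) (tensA b (idm 1) (idm 2)) castH_id.
rewrite (tensA (idm 1) bs (idm 2)) castH_id.
rewrite (mcomp_idm_tensr 2 (b ⊗ idm 1) (idm 1 ⊗ bs)) (R2a V).
by rewrite mtensNl tens_idm linearN /= compf1 opprK.
Qed.

Lemma cap_crossing_slide :
  (b ⊗ idm 1) ∘ (idm 1 ⊗ s) = (idm 1 ⊗ b) ∘ (s ⊗ idm 1).
Proof.
have podd : par C true ((idm 1 ⊗ b) ∘ (s ⊗ idm 1)).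
  exact: par_comp (par_tens (par_idm C 1) (par_b V)) (par_tens (par_s V) (par_idm C 1)).
by rewrite -[RHS](odd_snake podd) cup_crossing_cap.
Qed.

Lemma curl : (b ⊗ idm 1) ∘ (idm 1 ⊗ s) ∘ (bs ⊗ idm 1) = - idm 1.
Proof.
rewrite Defs.compA cap_crossing_slide -Defs.compA.
by rewrite (mcomp_idm_tensr 1 s bs) (R3b V) mtensNl linearN /= (R2b V).
Qed.

Lemma cap_crossing : b ∘ s = b.
Proof.
set g := b ∘ s.
have pg : par C true g by exact: par_comp (par_b V) (par_s V).
have zigzag : g = g ∘ (idm 2 ⊗ b) ∘ (idm 1 ⊗ (bs ⊗ idm 1)).
  rewrite -[idm 2](tens_idm C 1 1) (mtensA_r (idm 1) (idm 1) b) castH_id.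
  by rewrite mcomp_idm_tensl (R2b V) tens_idm compf1.
have slide : g ∘ (idm 2 ⊗ b) = - (b ∘ (g ⊗ idm 2)).
  have gb := mtens_split_swap pg (par_b V); rewrite tens0f expr1 scaleN1r in gb.
  rewrite gb opprK -(mtens_split g b).
  by have g_tens0 := tensf0 g; rewrite castH_id in g_tens0; rewrite g_tens0.
rewrite {1}zigzag Defs.compA slide mcompNl -Defs.compA.
rewrite -[idm 2](tens_idm C 1 1) (tensA g (idm 1) (idm 1)) castH_id.
rewrite (tensA (idm 1) bs (idm 1)) castH_id (mcomp_idm_tensr 1 (g ⊗ idm 1) (idm 1 ⊗ bs)).
rewrite /g -(mcomp_idm_tensr 1 b s) -Defs.compA -(R3a V) curl.
by rewrite mtensNl tens_idm linearN /= compf1 opprK.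
Qed.

Local Notation y1 := (y ⊗ idm 1).
Local Notation y2 := (idm 1 ⊗ y).

Lemma y1y2C : y1 ∘ y2 = y2 ∘ y1.
Proof. by rewrite mtens_split (mtens_split_swap (par_y V) (par_y V)) expr0 scale1r. Qed.

Lemma crossing_y1 : s ∘ y1 = y2 ∘ s - idm 2 - bs ∘ b.
Proof.
rewrite (R4a V) !mcompDl (R1a V) -!Defs.compA cap_crossing (R1a V) compf1.
by rewrite addrAC !addrK.
Qed.

Definition bubble j k : hom 0 0 := b ∘ (hpow y2 j ∘ (hpow y1 k ∘ bs)).
Definition crossed_bubble j k : hom 0 0 := b ∘ (hpow y2 j ∘ (s ∘ (hpow y1 k ∘ bs))).

Lemma bubbleSl j k : bubble j.+1 k = bubble j k.+1 + bubble j k.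
Proof.
rewrite /bubble /= -(Defs.compA y2) (Defs.compA b y2) (R4b V) mcompDl.
by rewrite -(Defs.compA b y1) (Defs.compA y1) (hpow_commr j y1y2C) -!Defs.compA.
Qed.

Lemma crossed_bubbleSr j k :
  crossed_bubble j k.+1 = crossed_bubble j.+1 k - bubble j k - bubble j 0 ∘ bubble 0 k.
Proof.
rewrite /crossed_bubble /bubble /= -(Defs.compA y1) (Defs.compA s y1) crossing_y1.
rewrite !(mcompDl, mcompNl, linearD, linearN) /= comp1f.
by rewrite -[y2 ∘ hpow y2 j]/(hpow y2 j.+1) hpowSr -!Defs.compA comp1f.
Qed.

Lemma crossed_bubble0r j : crossed_bubble j 0 = - bubble j 0.
Proof. by rewrite /crossed_bubble /bubble /= !comp1f (R3b V) !linearN. Qed.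

Lemma crossed_bubble0l k : crossed_bubble 0 k = bubble 0 k.
Proof. by rewrite /crossed_bubble /bubble /= !comp1f Defs.compA cap_crossing. Qed.

Hypothesis two_neq0 : (2%:R : K) != 0.

Lemma bubble_antidiagonal_eq0 N :
  (forall j k, (j + k < N)%N -> bubble j k = 0) ->
  forall j k, (j + k)%N = N -> bubble j k = 0.
Proof.
move=> below.
have bubble_const : forall j k, (j + k)%N = N -> bubble j k = bubble 0 N.
  by apply: antidiagonal_const => j k e; rewrite bubbleSl (below j k) ?addr0 // -e.
have crossed_const :
    forall j k, (j + k)%N = N -> crossed_bubble j k = crossed_bubble 0 N.
  apply: antidiagonal_const => j k e; rewrite crossed_bubbleSr (below j k) -?e //.
  by rewrite (below j 0) ?mcomp0l ?subr0 // addn0 -e ltnS leq_addr.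
have bubbleN : bubble 0 N = - bubble 0 N.
  rewrite -{1}crossed_bubble0l -(crossed_const N 0 (addn0 N)) crossed_bubble0r.
  by rewrite (bubble_const N 0 (addn0 N)).
by move=> j k /bubble_const ->; exact: eq_oppr_eq0 two_neq0 bubbleN.
Qed.

Lemma bubble_eq0 j k : bubble j k = 0.
Proof.
suff bubble_eq0_at N : forall j k, (j + k)%N = N -> bubble j k = 0 by exact: bubble_eq0_at.
elim/ltn_ind: N => N IH; apply: bubble_antidiagonal_eq0 => j' k' lt_N.
exact: IH lt_N _ _ erefl.
Qed.

End AffineVW.

Theorem mainTheorem5 (K : numClosedFieldType) (C : MonSuperCat K)
  (V : sVW_rep C) (k l : nat) :
  mcomp C (b V) (mcomp C (mtens C (hpow (y V) k) (hpow (y V) l)) (bs V)) = 0.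
Proof.
have two_neq0 : (2%:R : K) != 0 by rewrite pnatr_eq0.
rewrite -mtens_split hpow_tensr hpow_tensl (hpowC k l (y1y2C V)) -Defs.compA.
exact: bubble_eq0.
Qed.
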